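(* Let $K$ be a field and $M$ a finite $K$-Galois module. If coclasses $\sigma_1,\sigma_2,\sigma_1+\sigma_2\in H^1(K,M)$ correspond to étale $K$-algebras $L_1,L_2,L$ respectively, then $L$ is isomorphic to a $K$-subalgebra of $L_1\otimes_K L_2$.
   Context: $M$ is a finite abelian group with a continuous action $\phi:G_K\to\operatorname{Aut}M$, $G_K=\operatorname{Gal}(K^{\mathrm{sep}}/K)$. The correspondence between $H^1(K,M)$ and étale algebras is: a coclass represented by a crossed homomorphism $\sigma:G_K\to M$ corresponds to the étale $K$-algebra $L$ of degree $|M|$ whose coordinates (the $K$-algebra maps $L\to K^{\mathrm{sep}}$) admit a labeling $\{\iota_x\}_{x\in M}$ with $g\circ\iota_x=\iota_{\phi(g)x+\sigma(g)}$ for all $g\in G_K$; this is the $(\operatorname{Hol}M)$-extension associated to $G_K\to\operatorname{Hol}M=M\rtimes\operatorname{Aut}M$, $g\mapsto(x\mapsto\phi(g)x+\sigma(g))$, where $\operatorname{Hol}M$ is the group of affine bijections of $M$. *)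

From HB Require Import structures.
From mathcomp Require Import all_boot all_order all_algebra all_field.
Set Implicit Arguments. Unset Strict Implicit. Unset Printing Implicit Defensive.
Import GRing.Theory.
Local Open Scope ring_scope.

Definition is_sep_closure (K Om : fieldType) (j : {rmorphism K -> Om}) : Prop :=
  (forall x : Om, exists p : {poly K},
      [/\ p != 0, separable_poly p & root (map_poly j p) x]) /\
  (forall p : {poly Om}, separable_poly p -> (1 < size p)%N ->
      exists x, root p x).

Definition is_GK (K Om : fieldType) (j : K -> Om) (g : Om -> Om) : Prop :=
  [/\ g 1 = 1, forall x y, g (x + y) = g x + g y,
      forall x y, g (x * y) = g x * g y, bijective g
    & forall k, g (j k) = j k].

(* Continuity (local constancy) of a map from G_K (Krull topology) into a
   discrete set: a basic neighbourhood of g consists of the h agreeing with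
   g on a finite subset of Omega. *)
Definition GK_continuous (K Om : fieldType) (j : K -> Om) (T : Type)
    (f : (Om -> Om) -> T) : Prop :=
  forall g, is_GK j g -> exists s : seq Om, forall h, is_GK j h ->
    (forall x, x \in s -> h x = g x) -> f h = f g.

Definition galois_module (K Om : fieldType) (j : K -> Om) (M : finZmodType)
    (phi : (Om -> Om) -> M -> M) : Prop :=
  [/\ forall g, is_GK j g -> bijective (phi g),
      forall g, is_GK j g -> forall a b, phi g (a + b) = phi g a + phi g b,
      forall g h, is_GK j g -> is_GK j h -> phi (g \o h) =1 phi g \o phi h,
      phi id =1 id
    & GK_continuous j phi].

Definition crossed_hom (K Om : fieldType) (j : K -> Om) (M : finZmodType)
    (phi : (Om -> Om) -> M -> M) (s : (Om -> Om) -> M) : Prop :=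
  (forall g h, is_GK j g -> is_GK j h -> s (g \o h) = s g + phi g (s h)) /\
  GK_continuous j s.

Definition cohomologous (K Om : fieldType) (j : K -> Om) (M : finZmodType)
    (phi : (Om -> Om) -> M -> M) (s t : (Om -> Om) -> M) : Prop :=
  exists m : M, forall g, is_GK j g -> t g = s g + phi g m - m.

Definition Kalg_hom_to (K Om : fieldType) (j : K -> Om) (A : falgType K)
    (f : A -> Om) : Prop :=
  [/\ f 1 = 1, forall x y, f (x + y) = f x + f y,
      forall x y, f (x * y) = f x * f y
    & forall (k : K) x, f (k *: x) = j k * f x].

Definition Kalg_hom (K : fieldType) (A B : falgType K) (f : A -> B) : Prop :=
  [/\ f 1 = 1, forall x y, f (x + y) = f x + f y,
      forall x y, f (x * y) = f x * f y
    & forall (k : K) x, f (k *: x) = k *: f x].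

(* The etale K-algebra L corresponds to the cocycle s: deg L = |M| and its
   coordinates (K-algebra maps L -> Omega) admit a labeling (iota_x)_{x in M}
   (a bijection from M to the set of coordinates) with
   g o iota_x = iota_{phi(g) x + s(g)}. *)
Definition corresponds (K Om : fieldType) (j : K -> Om) (M : finZmodType)
    (phi : (Om -> Om) -> M -> M) (L : falgType K) (s : (Om -> Om) -> M) : Prop :=
  \dim (fullv : {vspace L}) = #|M| /\
  exists iota : M -> L -> Om,
    [/\ forall x, Kalg_hom_to j (iota x),
        forall x y, iota x =1 iota y -> x = y,
        forall f, Kalg_hom_to j f -> exists x, f =1 iota x
      & forall g, is_GK j g -> forall x,
          g \o iota x =1 iota (phi g x + s g)].

Definition corresponds_class (K Om : fieldType) (j : K -> Om) (M : finZmodType)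
    (phi : (Om -> Om) -> M -> M) (L : falgType K) (s : (Om -> Om) -> M) : Prop :=
  exists t, cohomologous j phi s t /\ corresponds j phi L t.

Definition is_tensor (K : fieldType) (L1 L2 T : falgType K)
    (i1 : L1 -> T) (i2 : L2 -> T) : Prop :=
  [/\ Kalg_hom i1, Kalg_hom i2,
      forall a b, i1 a * i2 b = i2 b * i1 a
    & basis_of (fullv : {vspace T})
        [seq i1 a * i2 b | a <- (vbasis (fullv : {vspace L1}) : seq L1),
                           b <- (vbasis (fullv : {vspace L2}) : seq L2)]].

(* The coordinates of L1 (x) L2 are the products of coordinates of L1 and L2,
   hence are labelled by M x M, and g in G_K moves the label (x, y) to
   (phi(g) x + t1(g), phi(g) y + t2(g)).  Writing the cocycle of L as
   t1 + t2 + (phi d - d), the surjection (x, y) |-> x + y - d from these labels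
   onto the labels of L is G_K-equivariant.  Galois descent (Dedekind's
   independence of characters, and Om^{G_K} = K, which follows from extending
   K-embeddings with Zorn's lemma) turns it into an injective K-algebra map
   L -> L1 (x) L2: the image of l is the element whose (x, y)-coordinate is
   iota_{x+y-d}(l). *)

From HB Require Import structures.
From mathcomp Require Import all_boot all_order all_algebra all_field.
From mathcomp Require Import boolp.
From mathcomp Require classical_sets.
Import GRing.Theory.
Local Open Scope ring_scope.

Set Implicit Arguments. Unset Strict Implicit. Unset Printing Implicit Defensive.

(** * Extending embeddings: the fixed field of G_K is K *)

Section SubfieldType.
Variables (Om : fieldType) (S : divringClosed Om).

Inductive subfield_type := SubfieldType x & x \in S.
Definition subfield_val u := let: SubfieldType x _ := u in x.

HB.instance Definition _ := [isSub for subfield_val].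
HB.instance Definition _ := [Choice of subfield_type by <:].
HB.instance Definition _ := [SubChoice_isSubIntegralDomain of subfield_type by <:].
HB.instance Definition _ := [SubIntegralDomain_isSubField of subfield_type by <:].

End SubfieldType.

Lemma minpoly_exists (F R : fieldType) (f : {rmorphism F -> R}) (z : R) (q : {poly F}) :
  q != 0 -> root (map_poly f q) z ->
  exists p : {poly F}, [/\ p \is monic, root (map_poly f p) z &
    forall u, root (map_poly f u) z -> p %| u].
Proof.
move=> q0 qz.
pose vanishing n :=
  `[< exists u : {poly F}, [/\ u != 0, root (map_poly f u) z & size u = n] >].
have vanishing_q : exists n, vanishing n by exists (size q); apply/asboolP; exists q.
have [_ /asboolP[r [r0 rz <-]] rmin] := ex_minnP vanishing_q.
have lr0 : (lead_coef r)^-1 != 0 by rewrite invr_eq0 lead_coef_eq0.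
exists ((lead_coef r)^-1 *: r); split.
- by rewrite monicE lead_coefZ mulVf ?lead_coef_eq0.
- by rewrite /root map_polyZ hornerZ (eqP rz) mulr0.
move=> u uz; rewrite dvdpZl //; apply/modp_eq0P/eqP/contraT => mod0.
have : (size r <= size (u %% r)%R)%N.
  apply: rmin; apply/asboolP; exists (u %% r); split => //.
  move: uz; rewrite {1}(divp_eq u r) /root rmorphD rmorphM /= hornerD hornerM.
  by rewrite (eqP rz) mulr0 add0r.
by rewrite leqNgt ltn_modp r0.
Qed.

Lemma inv_horner_map (F R : fieldType) (f : {rmorphism F -> R}) (x : R) (q : {poly F}) :
  q != 0 -> root (map_poly f q) x -> exists r : {poly F}, x^-1 = (map_poly f r).[x].
Proof.
move=> q0 qx; have [-> | x0] := eqVneq x 0.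
  by exists 0; rewrite invr0 rmorph0 horner0.
have [m [q1 /implyP/(_ q0) q1_0 qE]] := multiplicity_XsubC q 0.
set c := q1.[0]; set r := q1 %/ ('X - 0%:P).
have q1E : q1 = r * ('X - 0%:P) + c%:P by rewrite -modp_XsubC -divp_eq.
have Xm_x : ~~ root (('X - (f 0)%:P) ^+ m) x.
  by case: m {qE} => [|m]; rewrite ?expr0 ?root1 ?root_exp_XsubC ?rmorph0.
have rx : (map_poly f r).[x] * x = - f c.
  move: qx; rewrite qE rmorphM rmorphXn /= map_polyXsubC rootM (negPf Xm_x) orbF.
  rewrite q1E rmorphD rmorphM /= map_polyXsubC map_polyC /root hornerD hornerM.
  by rewrite hornerXsubC hornerC rmorph0 subr0 addr_eq0 => /eqP.
exists ((- c^-1) *: r); rewrite map_polyZ hornerZ rmorphN fmorphV.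
rewrite -[X in _ = _ * X](mulfK x0) rx.
by rewrite !mulNr mulrN opprK mulrA mulVf ?mul1r // fmorph_eq0.
Qed.

Lemma roots_seq (R : fieldType) (q : {poly R}) :
  q != 0 -> exists rs : seq R, uniq rs /\ forall x, root q x = (x \in rs).
Proof.
move=> q0.
pose listed n := `[< exists rs, [/\ uniq rs, all (root q) rs & size rs = n] >].
have listed0 : exists n, listed n by exists 0%N; apply/asboolP; exists [::].
have listed_ub n : listed n -> (n <= size q)%N.
  by move=> /asboolP[rs [urs qrs <-]]; apply: ltnW (max_poly_roots q0 qrs urs).
have [_ /asboolP[rs [urs qrs <-]] rsmax] := ex_maxnP listed0 listed_ub.
exists rs; split=> // x; apply/idP/idP => [qx|/(allP qrs)//].
apply: contraT => xrs; have /rsmax : listed (size (x :: rs)).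
  by apply/asboolP; exists (x :: rs); rewrite /= xrs urs qx.
by rewrite ltnn.
Qed.

Lemma algebraic_endo_surj (K R : fieldType) (j : {rmorphism K -> R}) (f : {rmorphism R -> R}) :
  (forall x, exists2 q : {poly K}, q != 0 & root (map_poly j q) x) ->
  (forall k, f (j k) = j k) -> forall y, exists x, f x = y.
Proof.
move=> alg fj y; have [q q0 qy] := alg y.
have [|rs [urs rsE]] := roots_seq (q := map_poly j q); first by rewrite map_poly_eq0.
have fq : map_poly f (map_poly j q) = map_poly j q.
  by rewrite -map_poly_comp; apply: eq_map_poly => k /=.
have frs : {subset map f rs <= rs}.
  move=> _ /mapP[x xrs ->]; rewrite -rsE -fq /root horner_map.
  by move: xrs; rewrite -rsE => /eqP->; rewrite rmorph0.
have ufrs : uniq (map f rs) by rewrite map_inj_uniq //; apply: fmorph_inj.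
have [_ /(_ y)] := uniq_min_size ufrs frs (eq_leq (esym (size_map f rs))).
rewrite -rsE qy => /mapP[x _ ->].
by exists x.
Qed.

Section PartialEmbeddings.
Variables (K Om : fieldType) (j : {rmorphism K -> Om}).

Definition Ksubfield (D : Om -> Prop) :=
  [/\ forall k, D (j k), forall x y, D x -> D y -> D (x - y),
      forall x y, D x -> D y -> D (x * y) & forall x, D x -> D x^-1].

Definition Kembedding (D : Om -> Prop) (s : Om -> Om) :=
  [/\ forall k, s (j k) = j k, forall x y, D x -> D y -> s (x - y) = s x - s y
    & forall x y, D x -> D y -> s (x * y) = s x * s y].

Record pemb := PEmb {
  pdom : Om -> Prop; pmap : Om -> Om;
  pdomP : Ksubfield pdom; pmapP : Kembedding pdom pmap }.

Definition pemb_le (a b : pemb) :=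
  (forall x, pdom a x -> pdom b x) /\ (forall x, pdom a x -> pmap b x = pmap a x).

Lemma pemb_le_refl a : pemb_le a a.
Proof. by split. Qed.

Lemma pemb_le_trans a b c : pemb_le a b -> pemb_le b c -> pemb_le a c.
Proof.
move=> [ab1 ab2] [bc1 bc2]; split=> [x /ab1/bc1 //|x ax].
by rewrite bc2 ?ab2 //; apply: ab1.
Qed.

Section SubfieldOfPemb.
Variable e : pemb.
Local Notation D := (pdom e).

Definition pdom_pred : {pred Om} := fun x => `[< D x >].

Lemma pdom_divring_closed : divring_closed pdom_pred.
Proof.
case: (pdomP e) => Dj DB DM DV; split.
- by apply/asboolP; rewrite -(rmorph1 j); apply: Dj.
- by move=> x y /asboolP Dx /asboolP Dy; apply/asboolP; apply: DB.
- by move=> x y /asboolP Dx /asboolP Dy; apply/asboolP; apply: DM => //; apply: DV.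
Qed.

Definition pdom_closed : divringClosed Om :=
  HB.pack pdom_pred (GRing.isDivringClosed.Build Om pdom_pred pdom_divring_closed).
Definition pdom_field := subfield_type pdom_closed.
Local Notation F := pdom_field.

Lemma pdom_val (u : F) : D (val u).
Proof. by case: u => x /= /asboolP. Qed.

Lemma mem_pdom_closed x : D x -> x \in pdom_closed.
Proof. by move=> Dx; apply/asboolP. Qed.

Definition pdom_of (x : Om) (Dx : D x) : F := Sub x (mem_pdom_closed Dx).

Definition Kin (k : K) : F := pdom_of (let: And4 Dj _ _ _ := pdomP e in Dj k).

Lemma val_Kin k : val (Kin k) = j k.
Proof. by rewrite SubK. Qed.

Lemma Kin_zmod : zmod_morphism Kin.
Proof. by move=> a b; apply: val_inj; rewrite rmorphB !val_Kin rmorphB. Qed.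

Lemma Kin_monoid : monoid_morphism Kin.
Proof.
split=> [|a b]; apply: val_inj; first by rewrite rmorph1 val_Kin rmorph1.
by rewrite rmorphM !val_Kin rmorphM.
Qed.

HB.instance Definition _ := GRing.isZmodMorphism.Build _ _ Kin Kin_zmod.
HB.instance Definition _ := GRing.isMonoidMorphism.Build _ _ Kin Kin_monoid.

Definition pmap_of (u : F) : Om := pmap e (val u).

Lemma pmap_of_zmod : zmod_morphism pmap_of.
Proof.
by move=> u v; rewrite /pmap_of rmorphB; case: (pmapP e) => _ sB _; apply: sB; apply: pdom_val.
Qed.

Lemma pmap_of_monoid : monoid_morphism pmap_of.
Proof.
case: (pmapP e) => sj _ sM; split=> [|u v]; rewrite /pmap_of.
  by rewrite rmorph1 -(rmorph1 j) sj.
by rewrite rmorphM sM //; apply: pdom_val.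
Qed.

HB.instance Definition _ := GRing.isZmodMorphism.Build _ _ pmap_of pmap_of_zmod.
HB.instance Definition _ := GRing.isMonoidMorphism.Build _ _ pmap_of pmap_of_monoid.

Lemma pmap_of_Kin k : pmap_of (Kin k) = j k.
Proof. by rewrite /pmap_of val_Kin; case: (pmapP e). Qed.

Lemma map_poly_Kin (f : {rmorphism F -> Om}) (q : {poly K}) :
  (forall k, f (Kin k) = j k) -> map_poly f (map_poly Kin q) = map_poly j q.
Proof. by move=> fK; rewrite -map_poly_comp; apply: eq_map_poly => k /=. Qed.

End SubfieldOfPemb.

Hypothesis Hsep : is_sep_closure j.

Section Extension.
Variables (e : pemb) (z : Om).
Local Notation D := (pdom e).
Local Notation F := (pdom_field e).
Local Notation sF := (@pmap_of e).

Lemma pdom_minpoly : exists p : {poly F}, [/\ p \is monic, root (map_poly val p) z &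
  forall u, root (map_poly val u) z -> p %| u].
Proof.
have [q [q0 _ qz]] := Hsep.1 z.
apply: (minpoly_exists (q := map_poly (Kin e) q)); first by rewrite map_poly_eq0.
by rewrite map_poly_Kin //; apply: val_Kin.
Qed.

Section Adjoin.
Variable p : {poly F}.
Hypotheses (pmon : p \is monic) (pz : root (map_poly val p) z)
  (pmin : forall u, root (map_poly val u) z -> p %| u).

Lemma separable_map_minpoly (f : {rmorphism F -> Om}) :
  (forall k, f (Kin e k) = j k) -> separable_poly (map_poly f p).
Proof.
move=> fK; have [q [_ qsep qz]] := Hsep.1 z.
apply: (@dvdp_separable _ (map_poly j q)); last by rewrite separable_map.
rewrite -(map_poly_Kin q fK) dvdp_map; apply: pmin.
by rewrite map_poly_Kin //; apply: val_Kin.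
Qed.

Lemma size_minpoly : (1 < size p)%N.
Proof.
rewrite ltnNge; apply/negP => /size1_polyC pE.
move: pz pmon; rewrite pE map_polyC /root hornerC monicE lead_coefC => /eqP v0 /eqP c1.
by move: v0; rewrite c1 /= => /eqP; rewrite oner_eq0.
Qed.

Lemma minpoly_root_pmap : exists w, root (map_poly sF p) w.
Proof.
apply: Hsep.2; first exact: separable_map_minpoly (@pmap_of_Kin e).
by rewrite size_map_poly size_minpoly.
Qed.

Lemma minpoly_other_root : ~ D z -> exists2 y, root (map_poly val p) y & y != z.
Proof.
move=> Dz; have [h hE] := factor_theorem _ _ pz.
have : separable_poly (map_poly val p) := separable_map_minpoly (@val_Kin e).
rewrite hE separable_root => /andP[hsep hz].
have [/size1_polyC hC|h_gt1] := leqP (size h) 1.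
  (* then p^val = c (X - z) is linear, so z lies in D *)
  case: Dz; rewrite hC rootC in hz.
  have coef i : val p`_i = h`_0 * ('X - z%:P)`_i.
    by move: (congr1 (fun q : {poly Om} => q`_i) hE); rewrite (coef_map val) {1}hC coefCM.
  suff -> : z = val (- p`_0 / p`_1) by apply: pdom_val.
  rewrite fmorph_div rmorphN /= !coef !coefB !coefX !coefC /=.
  by rewrite subr0 sub0r mulr1 mulrN opprK mulrC mulKf.
have [y hy] := Hsep.2 h hsep h_gt1.
by exists y; [rewrite rootM hy | apply: contraNneq hz => <-].
Qed.

Definition adjoin (u : Om) := exists P : {poly F}, u = (map_poly val P).[z].

Lemma adjoin_Ksubfield : Ksubfield adjoin.
Proof.
split.
- by move=> k; exists (Kin e k)%:P; rewrite map_polyC hornerC; apply/esym/val_Kin.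
- by move=> _ _ [P ->] [Q ->]; exists (P - Q); rewrite rmorphB hornerD hornerN.
- by move=> _ _ [P ->] [Q ->]; exists (P * Q); rewrite rmorphM hornerM.
move=> _ [P ->]; set x := _.[z]; have [q [q0 _ qx]] := Hsep.1 x.
have q'0 : map_poly (Kin e) q != 0 by rewrite map_poly_eq0.
have q'x : root (map_poly val (map_poly (Kin e) q)) x.
  by rewrite map_poly_Kin //; apply: val_Kin.
have [r ->] := inv_horner_map q'0 q'x.
by exists (r \Po P); rewrite map_comp_poly horner_comp.
Qed.

Variable w : Om.
Hypothesis hw : root (map_poly sF p) w.

(* Independent of the chosen P by adjoin_mapE; 0 is a junk value outside adjoin. *)
Definition adjoin_map (u : Om) : Om :=
  if pselect (adjoin u) is left h then (map_poly sF (sval (cid h))).[w] else 0.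

Lemma adjoin_mapE P : adjoin_map (map_poly val P).[z] = (map_poly sF P).[w].
Proof.
rewrite /adjoin_map; case: pselect => [h|]; last by case; exists P.
case: (cid h) => Q /= PQ.
have : root (map_poly val (Q - P)) z by rewrite /root rmorphB hornerD hornerN PQ subrr.
move/pmin; rewrite -(dvdp_map sF) => /dvdpP[r rE].
move: (congr1 (horner^~ w) rE) => /=.
by rewrite hornerM (eqP hw) mulr0 rmorphB hornerD hornerN => /eqP; rewrite subr_eq0 => /eqP.
Qed.

Lemma adjoin_map_Kembedding : Kembedding adjoin adjoin_map.
Proof.
split.
- move=> k; have jk : j k = (map_poly val (Kin e k)%:P).[z].
    by rewrite map_polyC hornerC /=.
  by rewrite {1}jk adjoin_mapE map_polyC hornerC /= pmap_of_Kin.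
- move=> _ _ [P ->] [Q ->].
  by rewrite -hornerN -hornerD -rmorphB !adjoin_mapE rmorphB hornerD hornerN.
- move=> _ _ [P ->] [Q ->].
  by rewrite -hornerM -rmorphM !adjoin_mapE rmorphM hornerM.
Qed.

Definition adjoin_pemb := PEmb adjoin_Ksubfield adjoin_map_Kembedding.

Lemma pemb_le_adjoin : pemb_le e adjoin_pemb.
Proof.
split=> x Dx /=; first by exists (pdom_of Dx)%:P; rewrite map_polyC hornerC.
have xE : x = (map_poly val (pdom_of Dx)%:P).[z] by rewrite map_polyC hornerC.
by rewrite {1}xE adjoin_mapE map_polyC hornerC.
Qed.

Lemma adjoin_pemb_z : pdom adjoin_pemb z /\ pmap adjoin_pemb z = w.
Proof.
have zE : z = (map_poly (val : F -> Om) 'X).[z] by rewrite map_polyX hornerX.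
by split; [exists 'X | rewrite /= {1}zE adjoin_mapE map_polyX hornerX].
Qed.

End Adjoin.

Lemma pemb_extend : exists e', pemb_le e e' /\ pdom e' z.
Proof.
have [p [pmon pz pmin]] := pdom_minpoly.
have [w hw] := minpoly_root_pmap pmon pz pmin.
exists (adjoin_pemb pmin hw); split; first exact: pemb_le_adjoin.
by case: (adjoin_pemb_z pmin hw).
Qed.

Lemma pemb_extend_moving : (forall x, D x -> pmap e x = x) -> ~ D z ->
  exists e', [/\ pemb_le e e', pdom e' z & pmap e' z != z].
Proof.
move=> eid Dz; have [p [pmon pz pmin]] := pdom_minpoly.
have [y hy yz] := minpoly_other_root pz pmin Dz.
have hy' : root (map_poly sF p) y.
  by rewrite (@eq_map_poly _ _ _ val) // => u; rewrite /pmap_of eid //; apply: pdom_val.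
have [ez ezy] := adjoin_pemb_z pmin hy'.
by exists (adjoin_pemb pmin hy'); split; [apply: pemb_le_adjoin | | rewrite ezy].
Qed.

End Extension.

Section ChainUnion.
Variables (C : pemb -> Prop) (c0 : pemb).
Hypotheses (Cc0 : C c0) (Ctot : forall a b, C a -> C b -> pemb_le a b \/ pemb_le b a).

Definition union_dom x := exists c, C c /\ pdom c x.

Definition union_map x :=
  if pselect (union_dom x) is left h then pmap (sval (cid h)) x else 0.

Lemma union_mapE c x : C c -> pdom c x -> union_map x = pmap c x.
Proof.
move=> Cc cx; rewrite /union_map; case: pselect => [h|]; last by case; exists c.
case: (cid h) => c' /= [Cc' c'x].
by case: (Ctot Cc Cc') => [[_ ->]|[_ ->]].
Qed.

Lemma union_dom2 x y : union_dom x -> union_dom y ->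
  exists c, [/\ C c, pdom c x & pdom c y].
Proof.
move=> [a [Ca ax]] [b [Cb bx]].
case: (Ctot Ca Cb) => [[ab _]|[ba _]]; first by exists b; split=> //; apply: ab.
by exists a; split=> //; apply: ba.
Qed.

Lemma union_Ksubfield : Ksubfield union_dom.
Proof.
split.
- by move=> k; exists c0; split=> //; case: (pdomP c0).
- move=> x y /union_dom2 /[apply] -[c [Cc cx cy]]; exists c; split=> //.
  by case: (pdomP c) => _ DB _ _; apply: DB.
- move=> x y /union_dom2 /[apply] -[c [Cc cx cy]]; exists c; split=> //.
  by case: (pdomP c) => _ _ DM _; apply: DM.
- move=> x [c [Cc cx]]; exists c; split=> //.
  by case: (pdomP c) => _ _ _ DV; apply: DV.
Qed.

Lemma union_Kembedding : Kembedding union_dom union_map.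
Proof.
split.
- move=> k; have c0k : pdom c0 (j k) by case: (pdomP c0).
  by rewrite (union_mapE Cc0 c0k); case: (pmapP c0).
- move=> x y /union_dom2 /[apply] -[c [Cc cx cy]].
  case: (pdomP c) (pmapP c) => _ DB _ _ [_ sB _].
  by rewrite (union_mapE Cc (DB _ _ cx cy)) !(union_mapE Cc) ?sB.
- move=> x y /union_dom2 /[apply] -[c [Cc cx cy]].
  case: (pdomP c) (pmapP c) => _ _ DM _ [_ _ sM].
  by rewrite (union_mapE Cc (DM _ _ cx cy)) !(union_mapE Cc) ?sM.
Qed.

Definition union_pemb := PEmb union_Ksubfield union_Kembedding.

Lemma union_pemb_ub c : C c -> pemb_le c union_pemb.
Proof. by move=> Cc; split=> x cx /=; [exists c | rewrite (union_mapE Cc)]. Qed.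

End ChainUnion.

Lemma pemb_extend_total (a : pemb) : exists2 e, pemb_le a e & forall z, pdom e z.
Proof.
pose a' : {e | pemb_le a e} := exist _ a (pemb_le_refl a).
pose R (u v : {e | pemb_le a e}) := `[< pemb_le (sval u) (sval v) >].
have [|||[e ae] emax] := classical_sets.ZL_preorder a' (R := R).
- by move=> u; apply/asboolP/pemb_le_refl.
- by move=> u v w /asboolP uv /asboolP vw; apply/asboolP/(pemb_le_trans uv vw).
- move=> A Atot; have [[u0 Au0]|noA] := pselect (exists u, A u); last first.
    by exists a' => u Au; case: noA; exists u.
  pose C c := exists2 u, A u & sval u = c.
  have Ctot b c : C b -> C c -> pemb_le b c \/ pemb_le c b.
    by move=> [u Au <-] [v Av <-]; case: (Atot u v Au Av) => /asboolP; [left|right].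
  have Cu0 : C (sval u0) by exists u0.
  have aU := pemb_le_trans (svalP u0) (union_pemb_ub Cu0 Ctot Cu0).
  exists (exist _ _ aU) => u Au; apply/asboolP/union_pemb_ub.
  by exists u.
exists e => // z; apply: contrapT => ez.
have [e' [ee' e'z]] := pemb_extend e z.
have /emax/asboolP[/(_ z e'z)] // : R (exist _ e ae) (exist _ e' (pemb_le_trans ae ee')).
exact: asboolT.
Qed.

Section TotalPemb.
Variable e : pemb.
Hypothesis etot : forall z, pdom e z.

Lemma total_pmap_zmod : zmod_morphism (pmap e).
Proof. by case: (pmapP e) => _ sB _ x y; apply: sB; apply: etot. Qed.

Lemma total_pmap_monoid : monoid_morphism (pmap e).
Proof.
case: (pmapP e) => sj _ sM; split=> [|x y]; last exact: sM.
by rewrite -(rmorph1 j) sj.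
Qed.

Definition total_rmorph : {rmorphism Om -> Om} :=
  HB.pack (pmap e) (GRing.isZmodMorphism.Build _ _ _ total_pmap_zmod)
    (GRing.isMonoidMorphism.Build _ _ _ total_pmap_monoid).

Lemma total_pemb_GK : is_GK j (pmap e).
Proof.
have fj : forall k, total_rmorph (j k) = j k by case: (pmapP e).
have alg x : exists2 q : {poly K}, q != 0 & root (map_poly j q) x.
  by have [q [q0 _ qx]] := Hsep.1 x; exists q.
have surj := algebraic_endo_surj alg fj.
split.
- exact: (rmorph1 total_rmorph).
- exact: (rmorphD total_rmorph).
- exact: (rmorphM total_rmorph).
- exists (fun y => sval (cid (surj y))) => [x|y]; last by case: cid.
  by apply: (fmorph_inj total_rmorph); case: cid.
- exact: fj.
Qed.

End TotalPemb.

Lemma GK_fixed_in_K (c : Om) : (forall g, is_GK j g -> g c = c) -> exists k, c = j k.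
Proof.
move=> cfix; apply: contrapT => cK.
pose D0 x := exists k, x = j k.
have D0sub : Ksubfield D0.
  split=> [k|_ _ [a ->] [b ->]|_ _ [a ->] [b ->]|_ [a ->]]; first by exists k.
  - by exists (a - b); rewrite rmorphB.
  - by exists (a * b); rewrite rmorphM.
  - by exists a^-1; rewrite fmorphV.
have idemb : Kembedding D0 id by [].
have [e [_ ec ecc]] := pemb_extend_moving (e := PEmb D0sub idemb) (fun _ _ => erefl) cK.
have [g [_ eg] gtot] := pemb_extend_total e.
by move: ecc; rewrite -(eg c ec) cfix ?eqxx //; apply: total_pemb_GK.
Qed.

End PartialEmbeddings.

(** * Independence of characters and Galois descent *)

Lemma morph_sub (M N : zmodType) (f : M -> N) :
  {morph f : a b / a + b} -> {morph f : a b / a - b}.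
Proof.
by move=> fD a b; apply: (addIr (f b)); rewrite -fD !subrK.
Qed.

Lemma characters_independent (A : pzSemiRingType) (F : fieldType) (I : finType)
    (chi : I -> A -> F) :
  (forall i, chi i 1 = 1) -> (forall i, {morph chi i : a b / a * b}) ->
  (forall i i', chi i =1 chi i' -> i = i') ->
  forall c : I -> F, (forall a, \sum_i c i * chi i a = 0) -> forall i, c i = 0.
Proof.
move=> chi1 chiM chi_inj c.
elim: {c}#|[set i | c i != 0]| {-2}c (leqnn #|[set i | c i != 0]|) => [|n IHn] c supp_c csum i.
  apply/eqP/contraT => ci; move: supp_c; rewrite leqn0 cards_eq0 => /eqP/setP/(_ i).
  by rewrite !inE ci.
apply/eqP/contraT => ci.
(* Comparing the relation at b * a with chi i b times the relation at a gives
   a relation with smaller support. *)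
have shift0 b k : c k * (chi k b - chi i b) = 0.
  apply: (IHn (fun k => c k * (chi k b - chi i b))) => [|a].
    rewrite -ltnS (leq_trans _ supp_c) // (cardsD1 i [set k | c k != 0]) inE ci add1n ltnS.
    apply/subset_leq_card/subsetP => l; rewrite !inE mulf_eq0 negb_or => /andP[cl dl].
    by rewrite cl andbT; apply: contraNneq dl => ->; rewrite subrr.
  under eq_bigr => l _ do rewrite -mulrA mulrBl -chiM mulrBr mulrCA.
  by rewrite sumrB -mulr_sumr !csum mulr0 subr0.
have ck0 k : k != i -> c k = 0.
  move=> ki; apply/eqP/contraT => ck; case/eqP: ki; apply: chi_inj => b.
  by move: (shift0 b k) => /eqP; rewrite mulf_eq0 (negPf ck) subr_eq0 => /eqP.
move: (csum 1); rewrite (bigD1 i) //= big1 => [|k /ck0->]; last by rewrite mul0r.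
by rewrite chi1 mulr1 addr0 => /eqP; rewrite (negPf ci).
Qed.

Section JLinear.
Variables (K Om : fieldType) (j : {rmorphism K -> Om}).

Definition jlinear (V : lmodType K) (f : V -> Om) :=
  {morph f : x y / x + y} /\ forall k x, f (k *: x) = j k * f x.

Lemma Kalg_hom_to_jlinear (A : falgType K) (f : A -> Om) : Kalg_hom_to j f -> jlinear f.
Proof. by case. Qed.

Section Coordinates.
Variables (V : vectType K) (n : nat) (X : n.-tuple V).

Lemma jlinear_coord (f : V -> Om) v : jlinear f -> v \in <<X>>%VS ->
  f v = \sum_(i < n) j (coord X i v) * f X`_i.
Proof.
move=> [fD fZ] Xv; rewrite {1}(coord_span Xv).
have f0 : f 0 = 0 by rewrite -(scale0r 0) fZ rmorph0 mul0r.
by rewrite (big_morph f fD f0); apply: eq_bigr => i _; rewrite fZ.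
Qed.

Lemma eq_jlinear (f g : V -> Om) : jlinear f -> jlinear g -> <<X>>%VS = fullv ->
  {in X, f =1 g} -> f =1 g.
Proof.
move=> flin glin Xfull fg v; have Xv : v \in <<X>>%VS by rewrite Xfull memvf.
rewrite (jlinear_coord flin Xv) (jlinear_coord glin Xv).
by apply: eq_bigr => i _; rewrite fg // mem_nth ?size_tuple.
Qed.

Definition jlin_ext (h : seq Om) (v : V) : Om :=
  \sum_(i < n) j (coord X i v) * h`_i.

Lemma jlin_ext_jlinear h : jlinear (jlin_ext h).
Proof.
split=> [x y|k x]; rewrite /jlin_ext.
  by rewrite -big_split; apply: eq_bigr => i _; rewrite linearD rmorphD mulrDl.
by rewrite mulr_sumr; apply: eq_bigr => i _; rewrite linearZ rmorphM mulrA.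
Qed.

Lemma jlin_ext_nth h (i : 'I_n) : free X -> jlin_ext h X`_i = h`_i.
Proof.
move=> Xfree; rewrite /jlin_ext (bigD1 i) //= big1 => [|k ki].
  by rewrite (@coord_free _ _ _ X) // eqxx rmorph1 mul1r addr0.
by rewrite (@coord_free _ _ _ X) // eq_sym (negPf ki) rmorph0 mul0r.
Qed.

End Coordinates.

End JLinear.

Section GaloisDescent.
Variables (K Om : fieldType) (j : {rmorphism K -> Om}).

Section GKRmorphism.
Variables (g : Om -> Om) (hg : is_GK j g).

Lemma GK_zmod : zmod_morphism g.
Proof. by case: hg => _ gD _ _ _; apply: morph_sub. Qed.

Lemma GK_monoid : monoid_morphism g.
Proof. by case: hg. Qed.

Definition GK_rmorph : {rmorphism Om -> Om} :=
  HB.pack g (GRing.isZmodMorphism.Build _ _ _ GK_zmod)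
    (GRing.isMonoidMorphism.Build _ _ _ GK_monoid).

Lemma GK_comp_jlinear (V : lmodType K) (f : V -> Om) : jlinear j f -> jlinear j (g \o f).
Proof.
case: hg => _ gD gM _ gj [fD fZ].
by split=> [x y|k x] /=; rewrite ?fD ?gD // fZ gM gj.
Qed.

End GKRmorphism.

Variables (A : falgType K) (I : finType) (chi : I -> A -> Om).
Hypotheses (chi_hom : forall i, Kalg_hom_to j (chi i))
  (chi_inj : forall i i', chi i =1 chi i' -> i = i')
  (dimA : \dim (fullv : {vspace A}) = #|I|).

Local Notation n := #|I|.
Let e : n.-tuple A := tcast dimA (vbasis fullv).

Let e_basis : basis_of fullv e.
Proof. by rewrite val_tcast; apply: vbasisP. Qed.

Let mem_e a : a \in <<e>>%VS.
Proof. by rewrite (span_basis e_basis) memvf. Qed.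

Definition char_matrix : 'M[Om]_n := \matrix_(r, k) chi (enum_val r) e`_k.
Definition coord_col (a : A) : 'cV[Om]_n := \col_k j (coord e k a).
Definition char_col (a : A) : 'cV[Om]_n := \col_r chi (enum_val r) a.

Lemma char_matrix_coord a : char_matrix *m coord_col a = char_col a.
Proof.
apply/colP => r; rewrite !mxE (jlinear_coord (Kalg_hom_to_jlinear (chi_hom _)) (mem_e a)).
by apply: eq_bigr => k _; rewrite !mxE mulrC.
Qed.

Lemma char_matrix_unit : char_matrix \in unitmx.
Proof.
rewrite -row_free_unit -kermx_eq0; apply/rowV0P => v /sub_kermxP vP0.
apply/rowP => r; rewrite mxE.
apply: (characters_independent (chi := fun r => chi (enum_val r))) => [i|i a b|i i'|a].
- by case: (chi_hom (enum_val i)).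
- by case: (chi_hom (enum_val i)) => _ _ chiM _; apply: chiM.
- by move/chi_inj/enum_val_inj.
have : v *m char_col a = 0 by rewrite -char_matrix_coord mulmxA vP0 mul0mx.
move/matrixP/(_ 0 0); rewrite !mxE => vc0; rewrite -[RHS]vc0.
by apply: eq_bigr => k _; rewrite mxE.
Qed.

Lemma char_col_inj : injective char_col.
Proof.
move=> a b ab; have /colP cab : coord_col a = coord_col b.
  rewrite -[LHS](mulKmx char_matrix_unit) char_matrix_coord ab.
  by rewrite -char_matrix_coord mulKmx // char_matrix_unit.
rewrite (coord_span (mem_e a)) (coord_span (mem_e b)); apply: eq_bigr => k _.
by congr (_ *: _); apply: (fmorph_inj j); move: (cab k); rewrite !mxE.
Qed.

Lemma chi_separates a b : (forall i, chi i a = chi i b) -> a = b.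
Proof. by move=> ab; apply: char_col_inj; apply/colP => r; rewrite !mxE. Qed.

Lemma GK_permutes_chi g (pi : I -> I) : is_GK j g ->
  (forall i, g \o chi i =1 chi (pi i)) -> bijective pi.
Proof.
move=> [_ _ _ gbij _] gchi; apply: injF_bij => i i' pii'; apply: chi_inj => a.
by apply: (bij_inj gbij); rewrite -!/((g \o _) a) !gchi pii'.
Qed.

Definition GK_equivariant (v : I -> Om) := forall g, is_GK j g ->
  forall i, exists i', g \o chi i =1 chi i' /\ g (v i) = v i'.

Lemma GK_fixed_solution (v : I -> Om) (d : 'cV[Om]_n) :
  GK_equivariant v -> char_matrix *m d = \col_r v (enum_val r) ->
  forall g, is_GK j g -> map_mx g d = d.
Proof.
move=> veq Pd g hg; have [pi pi_spec] := fin_all_exists (veq g hg).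
have [pi' _ piK'] := GK_permutes_chi hg (fun i => (pi_spec i).1).
apply: (can_inj (mulKmx char_matrix_unit)); rewrite /= Pd; apply/colP => r.
have [gchi gv] := pi_spec (pi' (enum_val r)).
rewrite piK' in gchi gv; rewrite !mxE -gv.
move: Pd => /colP/(_ (enum_rank (pi' (enum_val r)))); rewrite !mxE enum_rankK => <-.
rewrite -[g _]/(GK_rmorph hg _) rmorph_sum; apply: eq_bigr => k _.
by rewrite !mxE rmorphM /= enum_rankK -[g (chi _ _)]/((g \o chi _) _) gchi.
Qed.

Hypothesis fixed_in_K : forall c, (forall g, is_GK j g -> g c = c) -> exists k, c = j k.

Lemma Galois_descent (v : I -> Om) : GK_equivariant v -> exists a, forall i, chi i a = v i.
Proof.
move=> veq; pose d := invmx char_matrix *m \col_r v (enum_val r).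
have Pd : char_matrix *m d = \col_r v (enum_val r) by rewrite mulKVmx ?char_matrix_unit.
have dfix := GK_fixed_solution veq Pd.
have dK k : exists c, d k 0 = j c.
  by apply: fixed_in_K => g hg; move: (dfix g hg) => /matrixP/(_ k 0); rewrite mxE.
have [kap kapE] := fin_all_exists dK.
exists (\sum_k kap k *: e`_k) => i.
have dE : coord_col (\sum_k kap k *: e`_k) = d.
  by apply/colP => k; rewrite mxE coord_sum_free ?kapE //; apply: basis_free e_basis.
move: Pd; rewrite -dE char_matrix_coord => /colP/(_ (enum_rank i)).
by rewrite !mxE enum_rankK.
Qed.

End GaloisDescent.

(** * Characters of a tensor product *)

Section TensorCharacters.
Variables (K Om : fieldType) (j : {rmorphism K -> Om}).
Variables (L1 L2 T : falgType K) (i1 : L1 -> T) (i2 : L2 -> T).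
Hypothesis HT : is_tensor i1 i2.

Let B1 := vbasis (fullv : {vspace L1}).
Let B2 := vbasis (fullv : {vspace L2}).
Let pairs := [seq (a, b) | a <- (B1 : seq L1), b <- (B2 : seq L2)].
Let X := in_tuple [seq i1 p.1 * i2 p.2 | p <- pairs].

Let X_basis : basis_of fullv X.
Proof. by rewrite /= map_allpairs; case: HT. Qed.

Let span_B1 : <<B1>>%VS = fullv. Proof. exact: span_basis (vbasisP _). Qed.
Let span_B2 : <<B2>>%VS = fullv. Proof. exact: span_basis (vbasisP _). Qed.
Let span_X : <<X>>%VS = fullv. Proof. exact: span_basis X_basis. Qed.

Definition tensor_char (f1 : L1 -> Om) (f2 : L2 -> Om) : T -> Om :=
  jlin_ext j X [seq f1 p.1 * f2 p.2 | p <- pairs].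

Lemma tensor_char_jlinear f1 f2 : jlinear j (tensor_char f1 f2).
Proof. exact: jlin_ext_jlinear. Qed.

Lemma tensor_char_basis f1 f2 a b : a \in B1 -> b \in B2 ->
  tensor_char f1 f2 (i1 a * i2 b) = f1 a * f2 b.
Proof.
move=> aB bB; have ab : (a, b) \in pairs by apply: allpairs_f.
have ab_lt : (index (a, b) pairs < size X)%N by rewrite size_map index_mem.
have := jlin_ext_nth j [seq f1 p.1 * f2 p.2 | p <- pairs] (Ordinal ab_lt)
  (basis_free X_basis).
by rewrite /= /tensor_char !(nth_map (a, b)) ?index_mem // nth_index.
Qed.

Section Homs.
Variables (f1 : L1 -> Om) (f2 : L2 -> Om).
Hypotheses (f1_hom : Kalg_hom_to j f1) (f2_hom : Kalg_hom_to j f2).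

Lemma tensor_char_pure a b : tensor_char f1 f2 (i1 a * i2 b) = f1 a * f2 b.
Proof.
have [[_ i1D _ i1Z] [_ i2D _ i2Z] _ _] := HT.
have [tD tZ] := tensor_char_jlinear f1 f2.
have [_ f1D _ f1Z] := f1_hom; have [_ f2D _ f2Z] := f2_hom.
have on_B1 b' : b' \in B2 -> forall a', tensor_char f1 f2 (i1 a' * i2 b') = f1 a' * f2 b'.
  move=> b'B; apply: (eq_jlinear (X := B1)) => [||//|a' a'B]; last exact: tensor_char_basis.
  - by split=> [x y|k x]; rewrite ?i1D ?mulrDl ?tD // i1Z -scalerAl tZ.
  - by split=> [x y|k x]; rewrite ?f1D ?mulrDl // f1Z mulrA.
move: b; apply: (eq_jlinear (X := B2)) => [||//|b' b'B]; last exact: on_B1.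
- by split=> [x y|k x]; rewrite ?i2D ?mulrDr ?tD // i2Z -scalerAr tZ.
- by split=> [x y|k x]; rewrite ?f2D ?mulrDr // f2Z mulrCA.
Qed.

Lemma tensor_char_hom : Kalg_hom_to j (tensor_char f1 f2).
Proof.
have [[i11 _ i1M _] [i21 _ i2M _] i12C _] := HT.
have [f11 _ f1M _] := f1_hom; have [f21 _ f2M _] := f2_hom.
have [tD tZ] := tensor_char_jlinear f1 f2.
have pureM a b a' b' : i1 a * i2 b * (i1 a' * i2 b') = i1 (a * a') * i2 (b * b').
  by rewrite i1M i2M -mulrA (mulrA (i2 b)) -i12C !mulrA.
have X_pure u : u \in X -> exists a b, u = i1 a * i2 b.
  by case/mapP => -[a b] _ ->; exists a, b.
split=> // [|x y].
  by rewrite -[1]mulr1 -{1}i11 -i21 tensor_char_pure f11 f21 mulr1.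
move: x; apply: (eq_jlinear (X := X)) => [||//|_ /X_pure[a [b ->]]].
- by split=> [x x'|k x]; rewrite ?mulrDl ?tD // -scalerAl tZ.
- by split=> [x x'|k x]; rewrite ?tD ?mulrDl // tZ mulrA.
move: y; apply: (eq_jlinear (X := X)) => [||//|_ /X_pure[a' [b' ->]]].
- by split=> [y y'|k y]; rewrite ?mulrDr ?tD // -scalerAr tZ.
- by split=> [y y'|k y]; rewrite ?tD ?mulrDr // tZ mulrCA.
by rewrite pureM !tensor_char_pure f1M f2M mulrACA.
Qed.

End Homs.

Lemma tensor_char_GK g f1 f2 f1' f2' : is_GK j g ->
  g \o f1 =1 f1' -> g \o f2 =1 f2' -> g \o tensor_char f1 f2 =1 tensor_char f1' f2'.
Proof.
move=> hg gf1 gf2; apply: (eq_jlinear (X := X)) => [||//|_ /mapP[[a b] ab ->]].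
- exact/GK_comp_jlinear/tensor_char_jlinear.
- exact: tensor_char_jlinear.
have /allpairsP[[a' b'] [aB bB [-> ->]]] := ab.
by case: hg => _ _ gM _ _; rewrite /= !tensor_char_basis // gM -gf1 -gf2.
Qed.

Lemma tensor_char_inj f1 f2 f1' f2' :
  Kalg_hom_to j f1 -> Kalg_hom_to j f2 -> Kalg_hom_to j f1' -> Kalg_hom_to j f2' ->
  tensor_char f1 f2 =1 tensor_char f1' f2' -> f1 =1 f1' /\ f2 =1 f2'.
Proof.
move=> h1 h2 h1' h2' e; split=> [a|b].
  move: (e (i1 a * i2 1)); rewrite !tensor_char_pure //.
  by case: h2 => -> _ _ _; case: h2' => -> _ _ _; rewrite !mulr1.
move: (e (i1 1 * i2 b)); rewrite !tensor_char_pure //.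
by case: h1 => -> _ _ _; case: h1' => -> _ _ _; rewrite !mul1r.
Qed.

Lemma dim_tensor : \dim (fullv : {vspace T}) =
  (\dim (fullv : {vspace L1}) * \dim (fullv : {vspace L2}))%N.
Proof. by rewrite (size_basis X_basis) /= size_map size_allpairs !size_tuple. Qed.

End TensorCharacters.

Section CoordinateMap.
Variables (K Om : fieldType) (j : {rmorphism K -> Om}).
Hypothesis fixed_in_K : forall c, (forall g, is_GK j g -> g c = c) -> exists k, c = j k.
Variables (A B : falgType K) (IA IB : finType).
Variables (chiA : IA -> A -> Om) (chiB : IB -> B -> Om) (lam : IB -> IA).
Hypotheses (chiA_hom : forall x, Kalg_hom_to j (chiA x))
  (chiA_inj : forall x y, chiA x =1 chiA y -> x = y)
  (dimA : \dim (fullv : {vspace A}) = #|IA|)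
  (chiB_hom : forall i, Kalg_hom_to j (chiB i))
  (chiB_inj : forall i i', chiB i =1 chiB i' -> i = i')
  (dimB : \dim (fullv : {vspace B}) = #|IB|)
  (lam_surj : forall x, exists i, lam i = x)
  (lam_GK : forall g, is_GK j g -> forall i, exists i',
     g \o chiB i =1 chiB i' /\ g \o chiA (lam i) =1 chiA (lam i')).

Lemma injective_hom_of_label_map : exists f : A -> B, Kalg_hom f /\ injective f.
Proof.
have lift a : exists b, forall i, chiB i b = chiA (lam i) a.
  apply: (Galois_descent chiB_hom chiB_inj dimB fixed_in_K) => g hg i.
  by have [i' [gB gA]] := lam_GK hg i; exists i'; split=> //; apply: gA.
have [f fE] := choice lift.
have sepB := chi_separates chiB_hom chiB_inj dimB.
exists f; split.
  split=> [|a b|a b|k a]; apply: sepB => i; rewrite ?fE.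
  - by case: (chiA_hom (lam i)) => -> _ _ _; case: (chiB_hom i) => -> _ _ _.
  - by case: (chiA_hom (lam i)) => _ -> _ _; case: (chiB_hom i) => _ -> _ _; rewrite !fE.
  - by case: (chiA_hom (lam i)) => _ _ -> _; case: (chiB_hom i) => _ _ -> _; rewrite !fE.
  - by case: (chiA_hom (lam i)) => _ _ _ ->; case: (chiB_hom i) => _ _ _ ->; rewrite fE.
move=> a b fab; apply: (chi_separates chiA_hom chiA_inj dimA) => x.
by have [i <-] := lam_surj x; rewrite -!fE fab.
Qed.

End CoordinateMap.

Section CocycleArithmetic.
Variables (M : zmodType) (phi : M -> M).
Hypothesis phiD : {morph phi : a b / a + b}.

Lemma cohomologous_sum (s1 s2 m1 m2 m : M) (d := m - m1 - m2) :
  (s1 + phi m1 - m1) + (s2 + phi m2 - m2) + (phi d - d) = s1 + s2 + phi m - m.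
Proof.
pose cob a := phi a - a.
have cobD : {morph cob : a b / a + b} by move=> a b; rewrite /cob phiD opprD addrACA.
rewrite -!(addrA _ (phi _)) -/(cob m1) -/(cob m2) -/(cob m) -/(cob d) /d.
rewrite !(morph_sub cobD) (addrACA s1) -(addrA (s1 + s2)); congr (_ + _).
by rewrite -[cob m - _ - _]addrA -opprD addrC subrK.
Qed.

Lemma sum_label_equivariant (t1 t2 d x y : M) :
  phi (x + y - d) + (t1 + t2 + (phi d - d)) = phi x + t1 + (phi y + t2) - d.
Proof.
by rewrite (morph_sub phiD) phiD (addrACA (phi x + phi y)) addKr (addrACA (phi x)).
Qed.

End CocycleArithmetic.

Theorem proposition4p7
  (K Om : fieldType) (j : {rmorphism K -> Om})
  (Hsep : is_sep_closure j)
  (M : finZmodType) (phi : (Om -> Om) -> M -> M)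
  (Hphi : galois_module j phi)
  (s1 s2 : (Om -> Om) -> M)
  (Hs1 : crossed_hom j phi s1) (Hs2 : crossed_hom j phi s2)
  (L1 L2 L : falgType K)
  (HL1 : corresponds_class j phi L1 s1)
  (HL2 : corresponds_class j phi L2 s2)
  (HL : corresponds_class j phi L (fun g => s1 g + s2 g))
  (T : falgType K) (i1 : L1 -> T) (i2 : L2 -> T)
  (HT : is_tensor i1 i2) :
  exists f : L -> T, Kalg_hom f /\ injective f.
Proof.
have [t1 [[m1 t1E] [dim1 [io1 [io1_hom io1_inj _ io1_GK]]]]] := HL1.
have [t2 [[m2 t2E] [dim2 [io2 [io2_hom io2_inj _ io2_GK]]]]] := HL2.
have [t [[m tE] [dimL [io [io_hom io_inj _ io_GK]]]]] := HL.
have [_ phiD _ _ _] := Hphi.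
pose d := m - m1 - m2.
have t_sum g : is_GK j g -> t g = t1 g + t2 g + (phi g d - d).
  by move=> hg; rewrite tE // t1E // t2E // (cohomologous_sum (phiD g hg)).
pose chiT (p : M * M) := tensor_char j i1 i2 (io1 p.1) (io2 p.2).
apply: (injective_hom_of_label_map (GK_fixed_in_K Hsep) io_hom io_inj dimL
  (chiB := chiT) (lam := fun p => p.1 + p.2 - d)).
- by move=> p; apply: tensor_char_hom.
- move=> [x y] [x' y'] /(tensor_char_inj HT (io1_hom x) (io2_hom y) (io1_hom x') (io2_hom y')).
  by case=> /io1_inj -> /io2_inj ->.
- by rewrite (dim_tensor HT) dim1 dim2 card_prod.
- by move=> x; exists (x + d, 0); rewrite /= addr0 addrK.
move=> g hg [x y]; exists (phi g x + t1 g, phi g y + t2 g); split.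
  exact: (tensor_char_GK HT hg (io1_GK g hg x) (io2_GK g hg y)).
move=> a; rewrite (io_GK g hg _ a) /= t_sum // sum_label_equivariant //.
exact: phiD.
Qed.
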